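(* Let $R$ be a commutative ring with identity, $I$ an ideal of $R$, and $M$ an $R$-module. The following are equivalent: (1) $M$ is $I$-prime and $I$-torsion; (2) $M$ is $I$-coprime and $I$-adically complete; (3) $M$ is $I$-reduced and $I$-torsion; (4) $M$ is $I$-coreduced and $I$-adically complete; (5) $IM=0$.
   Context: All rings are commutative with identity and modules are unital. For an ideal $I$ of $R$ and an $R$-module $M$, $(0:_M I)=\{m\in M: Im=0\}$. An $R$-module $M$ is $I$-prime if for all $m\in M$, $Im=0$ implies $m=0$ or $IM=0$; $I$-coprime if $IM=0$ or $IM=M$; $I$-reduced if for all $m\in M$, $I^2m=0$ implies $Im=0$; $I$-coreduced if $IM=I^2M$. The $I$-torsion functor is $\Gamma_I(M)=\{m\in M : I^k m=0 \text{ for some } k\geq 1\}$ and $M$ is $I$-torsion if $\Gamma_I(M)=M$. The $I$-adic completion is $\Lambda_I(M)=\varprojlim_k M/I^kM$, and $M$ is $I$-adically complete if the canonical map $M\to\Lambda_I(M)$ is an isomorphism. *)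

From mathcomp Require Import all_boot all_algebra.
Set Implicit Arguments. Unset Strict Implicit. Unset Printing Implicit Defensive.
Import GRing.Theory.
Local Open Scope ring_scope.

Definition is_ideal (R : comPzRingType) (I : R -> Prop) : Prop :=
  [/\ I 0, (forall a b, I a -> I b -> I (a + b)) & (forall r a, I a -> I (r * a))].

Fixpoint idealpow (R : comPzRingType) (I : R -> Prop) (k : nat) : R -> Prop :=
  match k with
  | 0 => fun _ => True
  | k'.+1 => fun r => exists n (a b : 'I_n -> R),
        (forall i, I (a i)) /\ (forall i, idealpow I k' (b i)) /\ r = \sum_(i < n) a i * b i
  end.

Definition smul_span (R : comPzRingType) (M : lmodType R) (J : R -> Prop) : M -> Prop :=
  fun m => exists n (a : 'I_n -> R) (x : 'I_n -> M),
      (forall i, J (a i)) /\ m = \sum_(i < n) a i *: x i.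

Definition ann_elt (R : comPzRingType) (M : lmodType R) (J : R -> Prop) (m : M) : Prop :=
  forall r, J r -> r *: m = 0.

Definition IM_zero (R : comPzRingType) (M : lmodType R) (J : R -> Prop) : Prop :=
  forall m : M, smul_span J m -> m = 0.

Definition I_prime (R : comPzRingType) (M : lmodType R) (I : R -> Prop) : Prop :=
  forall m : M, ann_elt I m -> m = 0 \/ IM_zero M I.

Definition I_coprime (R : comPzRingType) (M : lmodType R) (I : R -> Prop) : Prop :=
  IM_zero M I \/ (forall m : M, smul_span I m).

Definition I_reduced (R : comPzRingType) (M : lmodType R) (I : R -> Prop) : Prop :=
  forall m : M, ann_elt (idealpow I 2) m -> ann_elt I m.

Definition I_coreduced (R : comPzRingType) (M : lmodType R) (I : R -> Prop) : Prop :=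
  forall m : M, smul_span I m <-> smul_span (idealpow I 2) m.

(* Gamma_I(M) = M *)
Definition I_torsion (R : comPzRingType) (M : lmodType R) (I : R -> Prop) : Prop :=
  forall m : M, exists2 k, (1 <= k)%N & ann_elt (idealpow I k) m.

(* The canonical map M -> lim_k M/I^k M is bijective (hence an isomorphism).
   An element of the inverse limit is given by representatives x k of classes in
   M / I^k M with x (k+1) = x k mod I^k M. *)
Definition I_adically_complete (R : comPzRingType) (M : lmodType R) (I : R -> Prop) : Prop :=
  (forall m : M, (forall k, smul_span (idealpow I k) m) -> m = 0) /\
  (forall x : nat -> M, (forall k, smul_span (idealpow I k) (x k.+1 - x k)) ->
     exists m : M, forall k, smul_span (idealpow I k) (m - x k)).

From mathcomp Require Import all_boot all_algebra.
From Stdlib Require Import Classical.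
Set Implicit Arguments. Unset Strict Implicit. Unset Printing Implicit Defensive.
Import GRing.Theory.
Local Open Scope ring_scope.

(* Every condition forces I M = 0.  An I-reduced module satisfies
   I^(k+1) m = 0 -> I m = 0 by descending induction on k, so if it is also
   I-torsion then I annihilates M; an I-prime module with I M <> 0 is I-reduced.
   An I-coprime module is I-coreduced, and in an I-coreduced module
   I M = I^k M for all k >= 1, so I M lies in the intersection of the I^k M,
   which is 0 when M is I-adically separated.  Conversely, if I M = 0 every
   condition holds trivially: M/I^k M = M for k >= 1. *)

Section IdealPower.
Variables (R : comPzRingType) (I : R -> Prop).
Hypothesis idI : is_ideal I.

Lemma ideal_sum n (F : 'I_n -> R) : (forall i, I (F i)) -> I (\sum_(i < n) F i).
Proof. by case: idI => I0 ID _ IF; apply: big_ind. Qed.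

Lemma idealpowS_mul k r s : I r -> idealpow I k s -> idealpow I k.+1 (r * s).
Proof. by move=> Ir Iks; exists 1%N, (fun _ => r), (fun _ => s); rewrite big_ord1. Qed.

Lemma idealpow1 r : I r -> idealpow I 1 r.
Proof. by move=> Ir; rewrite -[r]mulr1; apply: idealpowS_mul. Qed.

Lemma idealpowS_sub k r : idealpow I k.+1 r -> I r.
Proof.
case=> n [a [b [Ia [_ ->]]]]; apply: ideal_sum => i.
by case: idI => _ _ IM; rewrite mulrC; apply: IM.
Qed.

Lemma idealpowMl k r s : idealpow I k s -> idealpow I k (r * s).
Proof.
case: k => [//|k] [n [a [b [Ia [Ib ->]]]]].
exists n, (fun i => r * a i), b; split; first by case: idI => _ _ IM i; apply: IM.
by split=> //; rewrite mulr_sumr; apply: eq_bigr => i _; rewrite mulrA.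
Qed.

Lemma idealpowD_mul p q x y :
  idealpow I p x -> idealpow I q y -> idealpow I (p + q) (x * y).
Proof.
elim: p x => [|p IHp] x Ix Iy; first by rewrite add0n; apply: idealpowMl.
case: Ix => n [a [b [Ia [Ib ->]]]].
exists n, a, (fun i => b i * y); split=> //; split=> [i|]; first exact: IHp (Ib i) Iy.
by rewrite mulr_suml; apply: eq_bigr => i _; rewrite mulrA.
Qed.

End IdealPower.

Section SmulSpan.
Variables (R : comPzRingType) (M : lmodType R).
Implicit Types (J K : R -> Prop) (x y : M).

Lemma smul_span0 J : smul_span J (0 : M).
Proof. by exists 0%N, (fun _ => 0), (fun _ => 0); rewrite big_ord0; split=> // -[]. Qed.

Lemma smul_spanD J x y : smul_span J x -> smul_span J y -> smul_span J (x + y).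
Proof.
move=> [n1 [a1 [x1 [Ja1 ->]]]] [n2 [a2 [x2 [Ja2 ->]]]].
pose glue T (f1 : 'I_n1 -> T) (f2 : 'I_n2 -> T) i :=
  match split i with inl j => f1 j | inr j => f2 j end.
exists (n1 + n2)%N, (glue _ a1 a2), (glue _ x1 x2); split.
  by move=> i; rewrite /glue; case: (split i).
by rewrite big_split_ord /glue; congr (_ + _); apply: eq_bigr => i _;
  [rewrite (unsplitK (inl i)) | rewrite (unsplitK (inr i))].
Qed.

Lemma smul_span_sum J n (F : 'I_n -> M) :
  (forall i, smul_span J (F i)) -> smul_span J (\sum_(i < n) F i).
Proof. by move=> JF; apply: big_ind => //; [apply: smul_span0 | apply: smul_spanD]. Qed.

Lemma smul_spanZ J r x : J r -> smul_span J (r *: x).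
Proof. by move=> Jr; exists 1%N, (fun _ => r), (fun _ => x); rewrite big_ord1. Qed.

Lemma smul_span_sub J K x : (forall r, J r -> K r) -> smul_span J x -> smul_span K x.
Proof. by move=> JK [n [a [y [Ja ->]]]]; exists n, a, y; split=> // i; apply: JK. Qed.

Lemma smul_spanZ_mul J K r x :
  (forall s, J s -> K (r * s)) -> smul_span J x -> smul_span K (r *: x).
Proof.
move=> JK [n [a [y [Ja ->]]]]; rewrite scaler_sumr; apply: smul_span_sum => i.
by rewrite scalerA; apply/smul_spanZ/JK.
Qed.

Lemma smul_span_idealpow0 J x : smul_span (idealpow J 0) x.
Proof. by exists 1%N, (fun _ => 1), (fun _ => x); rewrite big_ord1 scale1r. Qed.

End SmulSpan.

Section Conditions.
Variables (R : comPzRingType) (M : lmodType R) (I : R -> Prop).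
Hypothesis idI : is_ideal I.

Lemma IM_zeroP : IM_zero M I <-> forall m : M, ann_elt I m.
Proof.
split=> [IM0 m r Ir | annM m [n [a [x [Ia ->]]]]]; first exact/IM0/smul_spanZ.
by apply: big1 => i _; apply: annM.
Qed.

Lemma smul_span_idealpow2_sub (m : M) : smul_span (idealpow I 2) m -> smul_span I m.
Proof. by apply: smul_span_sub => r; apply: idealpowS_sub. Qed.

Lemma ann_idealpowS_reduced k (m : M) :
  I_reduced M I -> ann_elt (idealpow I k.+1) m -> ann_elt I m.
Proof.
move=> redM; elim: k m => [|k IHk] m annm; first by move=> r /idealpow1; apply: annm.
apply: IHk => _ [n [a [b [Ia [Ib ->]]]]].
rewrite scaler_suml; apply: big1 => i _; rewrite -scalerA.
apply: (redM (b i *: m)) => // s Is; rewrite scalerA; apply: annm.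
by rewrite -add2n; apply: (idealpowD_mul idI) Is (Ib i).
Qed.

Lemma reduced_torsion_IM_zero : I_reduced M I -> I_torsion M I -> IM_zero M I.
Proof.
move=> redM torM; apply/IM_zeroP => m.
by case: (torM m) => -[|k] // _; apply: ann_idealpowS_reduced.
Qed.

Lemma prime_reduced : I_prime M I -> ~ IM_zero M I -> I_reduced M I.
Proof.
move=> primeM IMn0 m annm r Ir.
have /primeM [// | /IMn0 //] : ann_elt I (r *: m).
  by move=> s Is; rewrite scalerA; apply/annm/idealpowS_mul/idealpow1.
Qed.

Lemma coprime_coreduced : I_coprime M I -> I_coreduced M I.
Proof.
move=> coprM m; split; last exact: smul_span_idealpow2_sub.
case: coprM => [IM0 /IM0 -> | IMM _]; first exact: smul_span0.
case: (IMM m) => n [a [x [Ia ->]]]; apply: smul_span_sum => i.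
apply: (smul_spanZ_mul (J := I)) (IMM _) => s Is.
exact/idealpowS_mul/idealpow1.
Qed.

Lemma coreduced_smul_span_idealpow k (m : M) :
  I_coreduced M I -> smul_span I m -> smul_span (idealpow I k.+1) m.
Proof.
move=> coredM; elim: k m => [|k IHk] m Im.
  by apply: smul_span_sub Im => r; apply: idealpow1.
case/coredM: Im => n [s [x [Is ->]]]; apply: smul_span_sum => i.
case: (Is i) => p [c [d [Ic [Id ->]]]]; rewrite scaler_suml; apply: smul_span_sum => j.
rewrite -scalerA; apply: (smul_spanZ_mul (J := idealpow I k.+1)).
  by move=> t; apply: idealpowS_mul.
by apply/IHk/smul_spanZ; apply: (idealpowS_sub idI (k := 0%N) (Id j)).
Qed.

Lemma coreduced_complete_IM_zero :
  I_coreduced M I -> I_adically_complete M I -> IM_zero M I.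
Proof.
move=> coredM [sepM _] m Im; apply: sepM => -[|k]; first exact: smul_span_idealpow0.
exact: coreduced_smul_span_idealpow.
Qed.

Lemma IM_zero_torsion : IM_zero M I -> I_torsion M I.
Proof.
by move/IM_zeroP=> annM m; exists 1%N => // r /(idealpowS_sub idI); apply: annM.
Qed.

Lemma IM_zero_complete : IM_zero M I -> I_adically_complete M I.
Proof.
move=> IM0; have IkM0 k (m : M) : smul_span (idealpow I k.+1) m -> m = 0.
  by move=> Ikm; apply: IM0; apply: smul_span_sub Ikm => r; apply: idealpowS_sub.
split=> [m /(_ 1%N) /IkM0 // | x Cx].
have xS k : x k.+1 = x 1%N.
  by elim: k => // k <-; apply/eqP; rewrite -subr_eq0; apply/eqP/(IkM0 k)/Cx.
exists (x 1%N) => -[|k]; first exact: smul_span_idealpow0.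
by rewrite xS subrr; apply: smul_span0.
Qed.

End Conditions.

Theorem mainTheorem2 (R : comPzRingType) (M : lmodType R) (I : R -> Prop)
  (hI : is_ideal I) :
  [<-> I_prime M I /\ I_torsion M I;
       I_coprime M I /\ I_adically_complete M I;
       I_reduced M I /\ I_torsion M I;
       I_coreduced M I /\ I_adically_complete M I;
       IM_zero M I].
Proof.
have h15 : I_prime M I /\ I_torsion M I -> IM_zero M I.
  case=> primeM torM; case: (classic (IM_zero M I)) => // IMn0.
  exact: reduced_torsion_IM_zero hI (prime_reduced primeM IMn0) torM.
have h25 : I_coprime M I /\ I_adically_complete M I -> IM_zero M I.
  by case=> /(coprime_coreduced hI); apply: (coreduced_complete_IM_zero hI).
have h35 : I_reduced M I /\ I_torsion M I -> IM_zero M I.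
  by case; apply: (reduced_torsion_IM_zero hI).
have h45 : I_coreduced M I /\ I_adically_complete M I -> IM_zero M I.
  by case; apply: (coreduced_complete_IM_zero hI).
have h5 : IM_zero M I ->
    [/\ I_prime M I /\ I_torsion M I, I_coprime M I /\ I_adically_complete M I,
         I_reduced M I /\ I_torsion M I & I_coreduced M I /\ I_adically_complete M I].
  move=> IM0; have torM := IM_zero_torsion hI IM0; have cplM := IM_zero_complete hI IM0.
  have coprM : I_coprime M I by left.
  split; split=> //; [by move=> m _; right | by move=> m _; move/IM_zeroP: IM0 |].
  exact: coprime_coreduced.
by tfae=> [/h15 | /h25 | /h35 | /h45 | ] IM0; case: (h5 IM0).
Qed.
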